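(* For any $\alpha>0$, integers $n,m$ with $m>n$, $n$ dividing $m$ and $m/n>2$, and $k$ with $n\le k\le m$, there exists a full rank matrix $X\in\mathbb{R}^{n\times m}$ such that for every subset $\mathcal S\subseteq[m]$ of cardinality $k$ with $\mathrm{rank}(X_{\mathcal S})=n$, $$\|X_{\mathcal S}^{\dagger}\|_F^2\ge\Big(\frac{m-k}{k+\alpha^2}+1-\frac{k}{n}\Big)\|X^{\dagger}\|_F^2 .$$
   Context: $[m]=\{1,\dots,m\}$; $X_{\mathcal S}$ is the submatrix of columns of $X$ indexed by $\mathcal S$; $A^\dagger$ is the Moore–Penrose pseudo-inverse; $\|\cdot\|_F$ is the Frobenius norm. *)

From HB Require Import structures.
From mathcomp Require Import all_boot all_order all_algebra.
From mathcomp Require Import boolp classical_sets reals.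
Set Implicit Arguments. Unset Strict Implicit. Unset Printing Implicit Defensive.
Import Order.TTheory GRing.Theory Num.Theory.
Local Open Scope ring_scope.

Definition penrose (R : realType) (p q : nat)
    (A : 'M[R]_(p, q)) (B : 'M[R]_(q, p)) : Prop :=
  [/\ A *m B *m A = A, B *m A *m B = B,
      (A *m B)^T = A *m B & (B *m A)^T = B *m A].

Definition pinv (R : realType) (p q : nat) (A : 'M[R]_(p, q)) : 'M[R]_(q, p) :=
  xget 0 [set B | penrose A B].

Definition frob (R : realType) (p q : nat) (A : 'M[R]_(p, q)) : R :=
  Num.sqrt (\sum_(i < p) \sum_(j < q) A i j ^+ 2).

(* X_S : the columns of X indexed by S (in increasing order of index). *)
Definition colsubset (R : realType) (n m : nat) (X : 'M[R]_(n, m))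
    (S : {set 'I_m}) : 'M[R]_(n, #|S|) :=
  colsub (fun j : 'I_#|S| => enum_val j) X.

(* The worst case is the frame X = [I I ... I] of p = m/n stacked identities.
   Its Gram matrix is p I, so X^dagger = X^T / p and ||X^dagger||_F^2 = n/p.
   Any k columns of X are unit vectors, so ||X_S||_F^2 = k, and when X_S has
   full row rank its pseudo-inverse is a right inverse: tr(X_S X_S^dagger) = n.
   Cauchy-Schwarz for the trace pairing then gives
   n^2 <= ||X_S||_F^2 ||X_S^dagger||_F^2 = k ||X_S^dagger||_F^2, while the
   coefficient in the claim is at most m/k, and (m/k)(n/p) = n^2/k. *)
From HB Require Import structures.
From mathcomp Require Import all_boot all_order all_algebra.
From mathcomp Require Import boolp classical_sets reals.
From mathcomp Require Import ring lra.
Import Order.TTheory GRing.Theory Num.Theory.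
Local Open Scope ring_scope.
Set Implicit Arguments. Unset Strict Implicit.

Section PseudoInverse.
Variable R : realType.

Lemma frob_sqr p q (A : 'M[R]_(p, q)) :
  frob A ^+ 2 = \sum_(i < p) \sum_(j < q) A i j ^+ 2.
Proof.
by rewrite /frob sqr_sqrtr // sumr_ge0 // => i _; apply: sumr_ge0 => j _; apply: sqr_ge0.
Qed.

Lemma mulmx_tr_eq0 p q (A : 'M[R]_(p, q)) : A *m A^T = 0 -> A = 0.
Proof.
move=> AAT0; apply/matrixP => i j; rewrite mxE.
have := congr1 (fun M : 'M_p => M i i) AAT0; rewrite !mxE => sum0.
have term_ge0 l : predT l -> 0 <= A i l * A^T l i.
  by rewrite mxE -expr2 sqr_ge0.
have := psumr_eq0P term_ge0 sum0 (i := j) isT.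
by rewrite mxE -expr2 => /eqP; rewrite sqrf_eq0 => /eqP.
Qed.

Lemma row_free_gram_unit p q (A : 'M[R]_(p, q)) :
  row_free A -> A *m A^T \in unitmx.
Proof.
move=> freeA; rewrite -row_free_unit -kermx_eq0.
have KA0 : (kermx (A *m A^T) *m A) *m (kermx (A *m A^T) *m A)^T = 0.
  by rewrite trmx_mul mulmxA -(mulmxA _ A) mulmx_ker mul0mx.
by rewrite -(mulmx_free_eq0 _ freeA); apply/eqP/mulmx_tr_eq0.
Qed.

Lemma gram_unit_row_free p q (A : 'M[R]_(p, q)) :
  A *m A^T \in unitmx -> row_free A.
Proof.
move=> /mxrank_unit rkAAT; rewrite /row_free eqn_leq rank_leq_row /=.
by rewrite -{1}rkAAT mxrankM_maxl.
Qed.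

Lemma penrose_row_free p q (A : 'M[R]_(p, q)) :
  row_free A -> penrose A (A^T *m invmx (A *m A^T)).
Proof.
move=> /row_free_gram_unit AATu.
have AB1 : A *m (A^T *m invmx (A *m A^T)) = 1%:M by rewrite mulmxA mulmxV.
split; first by rewrite AB1 mul1mx.
- by rewrite -mulmxA AB1 mulmx1.
- by rewrite AB1 trmx1.
- by rewrite !trmx_mul trmx_inv trmx_mul trmxK -!mulmxA.
Qed.

Lemma pinv_penrose p q (A : 'M[R]_(p, q)) : row_free A -> penrose A (pinv A).
Proof.
move=> freeA; apply: (xgetPex 0 (P := [set B | penrose A B])).
by exists (A^T *m invmx (A *m A^T)); apply: penrose_row_free.
Qed.

(* A B is an idempotent of full rank, hence the identity. *)
Lemma penrose_mulmx1 p q (A : 'M[R]_(p, q)) B :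
  row_free A -> penrose A B -> A *m B = 1%:M.
Proof.
move=> /eqP rkA [ABA _ _ _].
have ABu : A *m B \in unitmx.
  rewrite -row_free_unit /row_free eqn_leq rank_leq_row /=.
  by rewrite -{1}rkA -{1}ABA mxrankM_maxl.
have ABAB : A *m B *m (A *m B) = A *m B by rewrite mulmxA ABA.
by rewrite -{1}(mulKmx ABu (A *m B)) ABAB mulVmx.
Qed.

Lemma pinv_mulmx1 p q (A : 'M[R]_(p, q)) : row_free A -> A *m pinv A = 1%:M.
Proof. by move=> freeA; apply: penrose_mulmx1 (pinv_penrose freeA). Qed.

Lemma pinv_row_free p q (A : 'M[R]_(p, q)) :
  row_free A -> pinv A = A^T *m invmx (A *m A^T).
Proof.
move=> freeA; have AATu := row_free_gram_unit freeA.
have AB1 := pinv_mulmx1 freeA.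
have [_ BAB _ BAsym] := pinv_penrose freeA.
have pinvE : pinv A = A^T *m ((pinv A)^T *m pinv A).
  by rewrite -{1}BAB -BAsym trmx_mul mulmxA.
have gram_mul1 : (A *m A^T) *m ((pinv A)^T *m pinv A) = 1%:M.
  by rewrite -mulmxA -pinvE AB1.
by rewrite {1}pinvE -(mulKmx AATu (_ *m pinv A)) gram_mul1 mulmx1.
Qed.

Lemma pinv_scalar_gram p q (A : 'M[R]_(p, q)) (c : R) :
  c != 0 -> A *m A^T = c%:M -> pinv A = c^-1 *: A^T.
Proof.
move=> c0 gramA.
have AATu : A *m A^T \in unitmx by rewrite gramA unitmxE det_scalar unitrX ?unitfE.
by rewrite pinv_row_free ?gram_unit_row_free // gramA invmx_scalar mul_mx_scalar.
Qed.

(* Cauchy-Schwarz for the trace pairing, in the form of a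
   discriminant: 0 <= sum (t A_ij - B_ji)^2. *)
Lemma mxtrace_mulmx_frob_le p q (A : 'M[R]_(p, q)) (B : 'M[R]_(q, p)) (t : R) :
  2 * t * \tr (A *m B) - t ^+ 2 * frob A ^+ 2 <= frob B ^+ 2.
Proof.
rewrite /mxtrace; under eq_bigr => i _ do rewrite mxE.
rewrite !frob_sqr [X in _ <= X]exchange_big /=.
rewrite !mulr_sumr -sumrB; apply: ler_sum => i _.
rewrite !mulr_sumr -sumrB; apply: ler_sum => j _.
have := sqr_ge0 (t * A i j - B j i); nra.
Qed.

Lemma frob_right_inverse_ge p q (A : 'M[R]_(p, q)) (B : 'M[R]_(q, p)) :
  A *m B = 1%:M -> 0 < frob A ^+ 2 -> p%:R ^+ 2 / frob A ^+ 2 <= frob B ^+ 2.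
Proof.
move=> AB1 frobA_gt0; set t := p%:R / frob A ^+ 2.
have frobA_neq0 : frob A != 0.
  by apply: contraTneq frobA_gt0 => ->; rewrite expr0n ltxx.
have -> : p%:R ^+ 2 / frob A ^+ 2 = 2 * t * \tr (A *m B) - t ^+ 2 * frob A ^+ 2.
  by rewrite AB1 mxtrace1 /t; field.
exact: mxtrace_mulmx_frob_le.
Qed.

End PseudoInverse.

Lemma count_modn_eq n p i : (i < n)%N ->
  (\sum_(0 <= j < p * n) (j %% n == i) = p)%N.
Proof.
move=> ltin; elim: p => [|p IHp]; first by rewrite mul0n big_geq.
rewrite mulSn addnC (@big_cat_nat _ _ _ (p * n)) ?leq_addr //= IHp.
rewrite -[X in (\sum_(X <= _ < _) _)%N]add0n big_addn addKn.
under eq_bigr => j _ do rewrite addnC modnMDl.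
rewrite big_mkord (bigD1 (Ordinal ltin)) //= modn_small // eqxx big1 ?addn1 //.
move=> j neq_ji; rewrite modn_small //; case: eqP => // eq_ji.
by case/eqP: neq_ji; apply: val_inj.
Qed.

Section StackedIdentity.
Variable R : realType.
Variables n m : nat.

Definition stacked_identity : 'M[R]_(n, m) :=
  \matrix_(i < n, j < m) (if (j %% n == i)%N then 1 else 0).

Lemma stacked_identity_col_norm (j : 'I_m) :
  (0 < n)%N -> \sum_(i < n) stacked_identity i j ^+ 2 = 1.
Proof.
move=> n_gt0; have ltjn : (j %% n < n)%N by rewrite ltn_pmod.
rewrite (bigD1 (Ordinal ltjn)) //= mxE eqxx expr1n big1 ?addr0 // => i neq_ij.
rewrite mxE; case: eqP => [eq_ji|_]; last by rewrite expr0n.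
by case/eqP: neq_ij; apply: val_inj.
Qed.

Lemma stacked_identity_gram :
  (n %| m)%N -> stacked_identity *m stacked_identity^T = (m %/ n)%:R%:M.
Proof.
move=> dvd_nm; apply/matrixP => i i'; rewrite !mxE.
under eq_bigr => j _ do rewrite !mxE.
case: (eqVneq i i') => [<-|neq_ii'].
  transitivity (\sum_(j < m) ((j %% n == i)%N : nat)%:R : R).
    by apply: eq_bigr => j _; case: ifP; rewrite ?mulr1 ?mulr0.
  rewrite -natr_sum -(big_mkord xpredT (fun j => (j %% n == i)%N : nat)).
  by rewrite -{1}(divnK dvd_nm) count_modn_eq.
rewrite big1 // => j _.
case: (eqVneq (j %% n)%N i) => [eq_ji|]; last by rewrite mul0r.
case: (eqVneq (j %% n)%N i') => [eq_ji'|]; last by rewrite mulr0.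
by case/eqP: neq_ii'; apply: val_inj; rewrite /= -eq_ji -eq_ji'.
Qed.

Lemma frob_colsubset_stacked_identity (S : {set 'I_m}) :
  (0 < n)%N -> frob (colsubset stacked_identity S) ^+ 2 = #|S|%:R.
Proof.
move=> n_gt0; rewrite frob_sqr exchange_big /=.
under eq_bigr => j _ do (under eq_bigr => i _ do rewrite mxE;
  rewrite stacked_identity_col_norm //).
by rewrite sumr_const card_ord.
Qed.

Lemma frob_pinv_stacked_identity :
  (0 < n)%N -> (n %| m)%N -> (0 < m %/ n)%N ->
  frob (pinv stacked_identity) ^+ 2 = m%:R / (m %/ n)%:R ^+ 2.
Proof.
move=> n_gt0 dvd_nm p_gt0.
rewrite (pinv_scalar_gram _ (stacked_identity_gram dvd_nm)); last first.
  by rewrite pnatr_eq0 -lt0n.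
rewrite frob_sqr.
under eq_bigr => j _ do (under eq_bigr => i _ do rewrite 2!mxE exprMn;
  rewrite -mulr_sumr stacked_identity_col_norm // mulr1).
by rewrite sumr_const card_ord mulr_natl exprVn.
Qed.

End StackedIdentity.

Lemma coefficient_le_ratio (R : realType) (a nr kr mr : R) :
  0 < nr -> 0 < kr -> kr <= mr ->
  (mr - kr) / (kr + a ^+ 2) + 1 - kr / nr <= mr / kr.
Proof.
move=> nr_gt0 kr_gt0 le_km.
have ka_gt0 : 0 < kr + a ^+ 2 by rewrite ltr_wpDr ?sqr_ge0.
have : (mr - kr) / (kr + a ^+ 2) <= (mr - kr) / kr.
  by rewrite ler_wpM2l ?subr_ge0 // lef_pV2 ?posrE // lerDl sqr_ge0.
have : (mr - kr) / kr + 1 = mr / kr by rewrite mulrBl mulfV ?gt_eqF // subrK.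
have : 0 <= kr / nr by rewrite divr_ge0 ?ltW.
lra.
Qed.

Lemma worst_case_ratio_le (R : realType) (a nr kr pr : R) :
  0 < nr -> 0 < kr -> 0 < pr -> kr <= pr * nr ->
  ((pr * nr - kr) / (kr + a ^+ 2) + 1 - kr / nr) * (pr * nr / pr ^+ 2)
    <= nr ^+ 2 / kr.
Proof.
move=> nr_gt0 kr_gt0 pr_gt0 le_km.
have -> : nr ^+ 2 / kr = pr * nr / kr * (pr * nr / pr ^+ 2).
  by field; rewrite !gt_eqF.
apply: ler_wpM2r (coefficient_le_ratio _ _ _ _) => //.
by rewrite divr_ge0 ?mulr_ge0 ?exprn_ge0 ?ltW.
Qed.

Theorem theorem4p5 (R : realType) (alpha : R) (n m k : nat) :
  0 < alpha -> (n < m)%N -> (n %| m)%N -> (2 < m %/ n)%N ->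
  (n <= k)%N -> (k <= m)%N ->
  exists X : 'M[R]_(n, m),
    \rank X = n /\
    forall S : {set 'I_m}, #|S| = k -> \rank (colsubset X S) = n ->
      ((m - k)%:R / (k%:R + alpha ^+ 2) + 1 - k%:R / n%:R)
        * frob (pinv X) ^+ 2
      <= frob (pinv (colsubset X S)) ^+ 2.
Proof.
move=> _ lt_nm dvd_nm lt2p le_nk le_km.
have n_gt0 : (0 < n)%N.
  by case: posnP dvd_nm lt_nm => // ->; rewrite dvd0n => /eqP ->.
have k_gt0 : (0 < k)%N by apply: leq_trans le_nk.
have p_gt0 : (0 < m %/ n)%N by apply: leq_trans lt2p.
have m_eq : m%:R = (m %/ n)%:R * n%:R :> R by rewrite -natrM divnK.
set X := stacked_identity R n m.
have gramX_unit : X *m X^T \in unitmx.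
  by rewrite stacked_identity_gram // unitmxE det_scalar unitrX // unitfE pnatr_eq0 -lt0n.
exists X; split; first exact/eqP/gram_unit_row_free.
move=> S cardS rkXS.
have frobXS : frob (colsubset X S) ^+ 2 = k%:R.
  by rewrite frob_colsubset_stacked_identity // cardS.
have := frob_right_inverse_ge (pinv_mulmx1 (introT eqP rkXS)).
rewrite frobXS ltr0n => /(_ k_gt0); apply: le_trans.
rewrite frob_pinv_stacked_identity // natrB // m_eq.
by apply: worst_case_ratio_le; rewrite ?ltr0n // -m_eq ler_nat.
Qed.
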